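(* If $\Delta(\Phi_{23},\Phi_{13},\Phi_{12})$ and $\Delta(\Phi_1,\Phi_2,\Phi_3)$ are reciprocal triangles with interior points $\Phi$ and $\Phi_{123}$ respectively, then $$\frac{(\Phi_1-\Phi_2)(\Phi_3-\Phi_{123})}{(\Phi_2-\Phi_3)(\Phi_{123}-\Phi_1)}=\frac{(\Phi_{23}-\Phi_{13})(\Phi_{12}-\Phi)}{(\Phi_{13}-\Phi_{12})(\Phi-\Phi_{23})},$$ that is, $Q(\Phi_1,\Phi_2,\Phi_3,\Phi_{123})=Q(\Phi_{23},\Phi_{13},\Phi_{12},\Phi)$.
   Context: The plane is identified with $\mathbb{C}$. The cross-ratio of four points is $Q(P_1,P_2,P_3,P_4)=\frac{(P_1-P_2)(P_3-P_4)}{(P_2-P_3)(P_4-P_1)}$. Reciprocal triangles: let $\Delta(\Phi_{23},\Phi_{13},\Phi_{12})$ be a non-degenerate triangle and $\Phi$ an additional point; let $\Delta(\Phi_1,\Phi_2,\Phi_3)$ be a non-degenerate triangle whose edges $(\Phi_1,\Phi_2)$, $(\Phi_2,\Phi_3)$, $(\Phi_3,\Phi_1)$ are parallel to the segments $(\Phi,\Phi_{12})$, $(\Phi,\Phi_{23})$, $(\Phi,\Phi_{13})$ respectively. The two triangles are reciprocal with interior points $\Phi$, $\Phi_{123}$ if the point $\Phi_{123}$ is such that the segments $(\Phi_1,\Phi_{123})$, $(\Phi_2,\Phi_{123})$, $(\Phi_3,\Phi_{123})$ are parallel to the edges $(\Phi_{13},\Phi_{12})$, $(\Phi_{12},\Phi_{23})$,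 $(\Phi_{23},\Phi_{13})$ respectively. *)

(* the plane is identified with R[i] = complex R, R a real closed field. *)
From HB Require Import structures.
From mathcomp Require Import all_boot all_order all_algebra.
From mathcomp Require Import complex.
Set Implicit Arguments. Unset Strict Implicit. Unset Printing Implicit Defensive.
Import Order.TTheory GRing.Theory Num.Theory.
Local Open Scope ring_scope.
Local Open Scope complex_scope.

Definition cross_ratio (R : rcfType) (P1 P2 P3 P4 : R[i]) : R[i] :=
  ((P1 - P2) * (P3 - P4)) / ((P2 - P3) * (P4 - P1)).

(* the segment (A,B) is parallel to the segment (C,D): both are genuine
   (non-degenerate) segments and B - A is a real multiple of D - C. *)
Definition parallel (R : rcfType) (A B C D : R[i]) : Prop :=
  B - A != 0 /\ D - C != 0 /\ complex.Im ((B - A) * (D - C)^*) = 0.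

Definition nondegenerate (R : rcfType) (A B C : R[i]) : Prop :=
  complex.Im ((B - A) * (C - A)^*) != 0.

Definition reciprocal (R : rcfType) (P23 P13 P12 P P1 P2 P3 P123 : R[i]) : Prop :=
  nondegenerate P23 P13 P12 /\ nondegenerate P1 P2 P3 /\
  parallel P1 P2 P P12 /\ parallel P2 P3 P P23 /\ parallel P3 P1 P P13 /\
  parallel P1 P123 P13 P12 /\ parallel P2 P123 P12 P23 /\
  parallel P3 P123 P23 P13.

(* Let [t1, t2, s1, s2, s3] be the real factors given by the parallelisms:
   [P2 - P1 = t1 (P12 - P)], [P3 - P2 = t2 (P23 - P)], [P123 - P1 = s1 (P12 - P13)],
   [P123 - P2 = s2 (P23 - P12)] and [P123 - P3 = s3 (P13 - P23)].  The closed
   triangles [P1 P2 P123] and [P2 P3 P123] give two real linear relations between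
   edges of [P, P12, P13, P23], both involving the edge [P12 P23]; taking the cross
   product with that edge eliminates it and leaves [s3 t1 = s1 t2].  Substituting
   the scaled edges into [Q(P1, P2, P3, P123)] gives [Q(P23, P13, P12, P)] times
   [t1 s3 / (t2 s1) = 1]. *)
From HB Require Import structures.
From mathcomp Require Import all_boot all_order all_algebra.
From mathcomp Require Import complex ring.
Set Implicit Arguments. Unset Strict Implicit. Unset Printing Implicit Defensive.
Import GRing.Theory Num.Theory.
Local Open Scope ring_scope.
Local Open Scope complex_scope.

Section PlaneCross.

Variable R : rcfType.
Implicit Types (u v w : R[i]) (x : R).

Definition cross u v : R := complex.Im (u * v^*).

Lemma crossDl u v w : cross (u + v) w = cross u w + cross v w.
Proof. by case: u v w => [a b] [c d] [e f]; rewrite /cross; simpc => /=; ring. Qed.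

Lemma crossBl u v w : cross (u - v) w = cross u w - cross v w.
Proof. by case: u v w => [a b] [c d] [e f]; rewrite /cross; simpc => /=; ring. Qed.

Lemma crossNl u w : cross (- u) w = - cross u w.
Proof. by case: u w => [a b] [e f]; rewrite /cross; simpc => /=; ring. Qed.

Lemma crossZl x u w : cross (x%:C * u) w = x * cross u w.
Proof. by case: u w => [a b] [e f]; rewrite /cross; simpc => /=; ring. Qed.

Lemma crossxx u : cross u u = 0.
Proof. by case: u => [a b]; rewrite /cross; simpc => /=; ring. Qed.

End PlaneCross.

Lemma parallelP (R : rcfType) (A B C D : R[i]) :
  parallel A B C D -> exists2 t : R, t != 0 & B - A = t%:C * (D - C).
Proof.
rewrite /parallel; set u := B - A; set v := D - C; move=> [u_neq0 [v_neq0 /eqP Im_uv]].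
have real_of_Im0 (z : R[i]) : complex.Im z = 0 -> (complex.Re z)%:C = z.
  by move=> Im0; rewrite {2}(complexE z) Im0 raddf0 mulr0 addr0.
have uv_real := real_of_Im0 _ (eqP Im_uv).
have vv_real := real_of_Im0 _ (ger0_Im (mulcJ_ge0 v)).
have vJ_neq0 : v^* != 0 by rewrite conjc_eq0.
have Re_neq0 (z : R[i]) : z != 0 -> (complex.Re z)%:C = z -> complex.Re z != 0.
  by move=> z_neq0 zE; apply: contraNneq z_neq0 => Re0; rewrite -zE Re0.
exists (complex.Re (u * v^*) / complex.Re (v * v^*)).
  by rewrite mulf_neq0 ?invr_eq0 ?Re_neq0 ?mulf_neq0.
rewrite rmorphM fmorphV /= uv_real vv_real; field; exact/andP.
Qed.

Lemma reciprocal_scale_balance (R : rcfType) (P23 P13 P12 P P1 P2 P3 P123 : R[i])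
    (t1 t2 s1 s2 s3 : R) :
  cross (P13 - P23) (P12 - P23) != 0 -> s1 != 0 ->
  P2 - P1 = t1%:C * (P12 - P) -> P3 - P2 = t2%:C * (P23 - P) ->
  P123 - P1 = s1%:C * (P12 - P13) -> P123 - P2 = s2%:C * (P23 - P12) ->
  P123 - P3 = s3%:C * (P13 - P23) ->
  s3 * t1 = s1 * t2.
Proof.
move=> nd s1_neq0 e1 e2 f1 f2 f3.
set w := P12 - P23; set d := P13 - P23.
set X := cross (P12 - P) w; set Y := cross d w.
have Y_neq0 : Y != 0 by [].
have rel1 : t1%:C * (P12 - P) = s1%:C * (w - d) + s2%:C * w.
  have -> : s1%:C * (w - d) + s2%:C * w = (P123 - P1) - (P123 - P2).
    by rewrite f1 f2 /w /d; ring.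
  by rewrite -e1; ring.
have rel2 : t2%:C * ((P12 - P) - w) = - (s3%:C * d) - s2%:C * w.
  have -> : - (s3%:C * d) - s2%:C * w = (P123 - P2) - (P123 - P3).
    by rewrite f2 f3 /w /d; ring.
  have -> : (P12 - P) - w = P23 - P by rewrite /w; ring.
  by rewrite -e2; ring.
have tX1 : t1 * X = - (s1 * Y).
  move/(congr1 (fun z => cross z w)): rel1.
  by rewrite /= crossDl !crossZl -/X crossBl crossxx -/Y => ->; ring.
have tX2 : t2 * X = - (s3 * Y).
  move/(congr1 (fun z => cross z w)): rel2.
  by rewrite /= crossZl crossBl crossxx subr0 -/X crossBl crossNl !crossZl crossxx -/Y => ->; ring.
have X_neq0 : X != 0.
  by apply: contraNneq (mulf_neq0 s1_neq0 Y_neq0) => X0; rewrite -oppr_eq0 -tX1 X0 mulr0.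
apply: (mulIf X_neq0); rewrite -!mulrA tX1 tX2; ring.
Qed.

Theorem corollary1 (R : rcfType) (P23 P13 P12 P P1 P2 P3 P123 : R[i]) :
  reciprocal P23 P13 P12 P P1 P2 P3 P123 ->
  cross_ratio P1 P2 P3 P123 = cross_ratio P23 P13 P12 P.
Proof.
move=> [nd [_ [h12 [h23 [_ [g1 [g2 g3]]]]]]].
have [_ [P23P_neq0 _]] := h23.
have [_ [P12P13_neq0 _]] := g1.
have [t1 _ e1] := parallelP h12; have [t2 t2_neq0 e2] := parallelP h23.
have [s1 s1_neq0 f1] := parallelP g1; have [s2 _ f2] := parallelP g2.
have [s3 s3_neq0 f3] := parallelP g3.
have balance := reciprocal_scale_balance nd s1_neq0 e1 e2 f1 f2 f3.
rewrite /cross_ratio -[P1 - P2]opprB -[P2 - P3]opprB -[P3 - P123]opprB e1 e2 f1 f3.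
have -> : t1 = s1 * t2 / s3 by rewrite -balance mulrC mulKf.
rewrite !rmorphM fmorphV /=; field.
by rewrite !fmorph_eq0 -[P - P23]opprB -[P13 - P12]opprB !oppr_eq0 s1_neq0 s3_neq0
  t2_neq0 P23P_neq0 P12P13_neq0.
Qed.
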